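(* Let $Q\subset S^d$ be affinely independent, and let $S(C,R)$ be its touching sphere. Then $Q$ is nearly positively spanning if and only if $C\in\mathrm{conv}\,Q$. In this case $\mathrm{def}\,Q=\sqrt{1-R^2}$.
   Context: $S^d$ is the unit sphere in $\mathbb{R}^{d+1}$, $O$ is the origin, and $S(C,R)=\{x\in\mathbb{R}^{d+1}:\|x-C\|=R\}$. The touching sphere of an affinely independent set $Q$ is the unique sphere $S(C,R)$ with $C\in\mathrm{aff}\,Q$ and $Q\subset S(C,R)$. The set $Q$ is nearly positively spanning if it is affinely independent and the orthogonal projection $O'$ of $O$ onto $\mathrm{aff}\,Q$ lies in $\mathrm{conv}\,Q$. Its deficiency is then $\mathrm{def}\,Q=\|O'\|$. *)

From HB Require Import structures.
From mathcomp Require Import all_boot all_order all_algebra.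
Set Implicit Arguments. Unset Strict Implicit. Unset Printing Implicit Defensive.
Import Order.TTheory GRing.Theory Num.Theory.
Local Open Scope ring_scope.

Section Defs.
Variables (R : rcfType) (n k : nat).
Implicit Types (u v x : 'rV[R]_n) (q : 'I_k -> 'rV[R]_n).

Definition dotv u v : R := \sum_(i < n) u 0 i * v 0 i.
Definition normv u : R := Num.sqrt (dotv u u).

Definition aff_indep q : Prop :=
  forall l : 'I_k -> R, \sum_(i < k) l i = 0 ->
    \sum_(i < k) l i *: q i = 0 -> forall i, l i = 0.

Definition in_aff q x : Prop :=
  exists l : 'I_k -> R, \sum_(i < k) l i = 1 /\ x = \sum_(i < k) l i *: q i.
Definition in_conv q x : Prop :=
  exists l : 'I_k -> R, (forall i, 0 <= l i) /\ \sum_(i < k) l i = 1 /\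
    x = \sum_(i < k) l i *: q i.

Definition is_proj_origin q x : Prop :=
  in_aff q x /\ forall i j, dotv x (q i - q j) = 0.

Definition touching_sphere q (C : 'rV[R]_n) (r : R) : Prop :=
  in_aff q C /\ forall i, normv (q i - C) = r.

Definition nearly_pos_spanning q : Prop :=
  aff_indep q /\ exists x, is_proj_origin q x /\ in_conv q x.

End Defs.

(** For a unit vector [u], [|u - C|^2 = 1 - 2 <C, u> + |C|^2], so the centre
    [C] of the touching sphere of points of the unit sphere has the same inner
    product [c] with every point of [Q].  Since [C] lies in [aff Q], it is
    therefore the orthogonal projection [O'] of the origin onto [aff Q], which
    is unique.  Finally [|C|^2 = c = (1 + |C|^2 - R^2) / 2]. *)

From mathcomp Require Import all_boot all_order all_algebra.
From mathcomp Require Import lra.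
Import Order.TTheory GRing.Theory Num.Theory.
Local Open Scope ring_scope.

Set Implicit Arguments.
Unset Strict Implicit.
Unset Printing Implicit Defensive.

Section InnerProduct.
Variables (R : rcfType) (n : nat).
Implicit Types (u v w : 'rV[R]_n).

Lemma dotvC u v : dotv u v = dotv v u.
Proof. by apply: eq_bigr => i _; rewrite mulrC. Qed.

Lemma dotv0l w : dotv 0 w = 0.
Proof. by rewrite /dotv big1 // => i _; rewrite mxE mul0r. Qed.

Lemma dotvDl u v w : dotv (u + v) w = dotv u w + dotv v w.
Proof. by rewrite /dotv -big_split; apply: eq_bigr => i _; rewrite mxE mulrDl. Qed.

Lemma dotvZl a u w : dotv (a *: u) w = a * dotv u w.
Proof. by rewrite /dotv mulr_sumr; apply: eq_bigr => i _; rewrite mxE mulrA. Qed.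

Lemma dotvBl u v w : dotv (u - v) w = dotv u w - dotv v w.
Proof. by rewrite dotvDl -scaleN1r dotvZl mulN1r. Qed.

Lemma dotvBr u v w : dotv w (u - v) = dotv w u - dotv w v.
Proof. by rewrite dotvC dotvBl !(dotvC w). Qed.

Lemma dotv_suml m (l : 'I_m -> R) (p : 'I_m -> 'rV[R]_n) w :
  dotv (\sum_(i < m) l i *: p i) w = \sum_(i < m) l i * dotv (p i) w.
Proof.
rewrite (big_morph (fun u => dotv u w) (fun u v => dotvDl u v w) (dotv0l w)).
by apply: eq_bigr => i _; rewrite dotvZl.
Qed.

Lemma dotvv_ge0 u : 0 <= dotv u u.
Proof. by apply: sumr_ge0 => i _; rewrite -expr2 sqr_ge0. Qed.

Lemma dotvv_eq0 u : dotv u u = 0 -> u = 0.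
Proof.
move=> uu0; apply/rowP => j; rewrite mxE.
have sq_ge0 i : xpredT i -> 0 <= u 0 i * u 0 i by rewrite -expr2 sqr_ge0.
have /eqP := @psumr_eq0P _ _ xpredT _ sq_ge0 uu0 j isT.
by rewrite mulf_eq0 orbb => /eqP.
Qed.

Lemma normv_sqr u : normv u ^+ 2 = dotv u u.
Proof. by rewrite sqr_sqrtr // dotvv_ge0. Qed.

Lemma normvB_sqr u v :
  normv (u - v) ^+ 2 = normv u ^+ 2 - 2 * dotv u v + normv v ^+ 2.
Proof.
rewrite !normv_sqr dotvBl !dotvBr (dotvC v u).
by rewrite mulr2n mulrDl mul1r; lra.
Qed.

End InnerProduct.

Section AffineHull.
Variables (R : rcfType) (n k : nat) (q : 'I_k -> 'rV[R]_n).
Implicit Types (x y z : 'rV[R]_n).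

Lemma in_aff_gt0 x : in_aff q x -> (0 < k)%N.
Proof.
case: k q => [|//] q0 [l [suml1 _]].
by move: suml1; rewrite big_ord0 => /eqP; rewrite eq_sym oner_eq0.
Qed.

Lemma dotv_in_aff z c y :
  (forall i, dotv z (q i) = c) -> in_aff q y -> dotv z y = c.
Proof.
move=> zq [l [suml1 ->]]; rewrite dotvC dotv_suml.
under eq_bigr => i _ do rewrite dotvC zq.
by rewrite -mulr_suml suml1 mul1r.
Qed.

Lemma dotv_in_affB z x y : (forall i j, dotv z (q i - q j) = 0) ->
  in_aff q x -> in_aff q y -> dotv z (x - y) = 0.
Proof.
move=> zqB affx affy; pose i0 := Ordinal (in_aff_gt0 affx).
have zq i : dotv z (q i) = dotv z (q i0).
  by apply/eqP; rewrite -subr_eq0 -dotvBr zqB.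
by rewrite dotvBr (dotv_in_aff zq affx) (dotv_in_aff zq affy) subrr.
Qed.

Lemma is_proj_origin_uniq x y :
  is_proj_origin q x -> is_proj_origin q y -> x = y.
Proof.
move=> [affx xqB] [affy yqB]; apply/eqP; rewrite -subr_eq0; apply/eqP.
apply: dotvv_eq0.
by rewrite dotvBl (dotv_in_affB xqB) // (dotv_in_affB yqB) // subrr.
Qed.

End AffineHull.

Section TouchingSphere.
Variables (R : rcfType) (n k : nat) (q : 'I_k -> 'rV[R]_n).
Variables (C : 'rV[R]_n) (r : R).
Hypotheses (q_unit : forall i, normv (q i) = 1) (qCr : touching_sphere q C r).

Lemma touching_center_dotv i : 2 * dotv C (q i) = 1 + dotv C C - r ^+ 2.
Proof.
have := normvB_sqr (q i) C; case: qCr => _ ->.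
by rewrite q_unit normv_sqr dotvC; lra.
Qed.

Lemma touching_center_proj : is_proj_origin q C.
Proof.
split=> [|i j]; first by case: qCr.
have := touching_center_dotv i; have := touching_center_dotv j.
by rewrite dotvBr; lra.
Qed.

Lemma normv_touching_center : normv C = Num.sqrt (1 - r ^+ 2).
Proof.
case: qCr => affC _.
have Cq i : dotv C (q i) = (1 + dotv C C - r ^+ 2) / 2.
  by rewrite -(touching_center_dotv i); lra.
by congr Num.sqrt; have := dotv_in_aff Cq affC; lra.
Qed.

End TouchingSphere.

Theorem proposition2p5 (R : rcfType) (d k : nat) (q : 'I_k -> 'rV[R]_(d.+1))
    (C : 'rV[R]_(d.+1)) (r : R) :
  (forall i, normv (q i) = 1) ->
  aff_indep q ->
  touching_sphere q C r ->
  (nearly_pos_spanning q <-> in_conv q C) /\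
  (nearly_pos_spanning q ->
     forall x, is_proj_origin q x -> normv x = Num.sqrt (1 - r ^+ 2)).
Proof.
move=> q_unit q_indep qCr.
have projC := touching_center_proj q_unit qCr.
split; last first.
  by move=> _ x /(is_proj_origin_uniq projC) <-; apply: normv_touching_center.
split=> [[_ [x [projx convx]]] | convC]; last by split=> //; exists C.
by rewrite (is_proj_origin_uniq projC projx).
Qed.
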